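(* Let $k\ge 1$, let $d=k+1$, and let $A$ be a $d\times d$ matrix with entries in $\{0,1\}$ which is primitive (i.e. $A^p$ has all entries positive for some integer $p\ge1$). Then $A\in P^*(k)$ if and only if $A$ has a positive row, i.e. there is $i_0\in D$ with $A(i_0,j)=1$ for all $j\in D$.
   Context: Let $K=\{1,\dots,k\}$ and $D=\{1,\dots,d\}$. The $k$-tree $\tau$ is the set $K^*$ of all finite words over $K$; the empty word $\epsilon$ is the root, and for a word $x$ and $g\in K$ the word $xg$ is a child of $x$. $L_n$ denotes the set of words of length exactly $n$. For a $d\times d$ $0,1$ matrix $A$, let $X_A=\{\lambda\in D^{\tau}: A(\lambda(x),\lambda(xg))>0 \text{ for all } x\in\tau,\ g\in K\}$. For $i\in D$ and $\mathcal T\subseteq\tau$, the arrival set is $\mathcal A(i,\epsilon,\mathcal T)=\{\lambda|_{\mathcal T}:\lambda\in X_A,\ \lambda(\epsilon)=i\}$. The matrix $A$ is in $P^*(k,n)$ if $\mathcal A(i,\epsilon,L_n)=D^{L_n}$ for every $i\in D$ (i.e. every labeling of $L_n$ by $D$ is achievable from every root symbol), and $P^*(k)=\bigcup_{n\ge0}P^*(k,n)$. *)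

From mathcomp Require Import all_boot all_order all_algebra.
Set Implicit Arguments. Unset Strict Implicit. Unset Printing Implicit Defensive.
Import Order.TTheory GRing.Theory Num.Theory.
Local Open Scope ring_scope.

(* Alphabet K = {1..k} is 'I_k, symbol set D = {1..d} is 'I_d.
   The k-tree tau is seq 'I_k (finite words); the root is [::] and the
   children of x are rcons x g (i.e. the word xg).  L_n (words of length n) is n.-tuple 'I_k. *)

Definition XA (k d : nat) (A : 'M[int]_d) (lam : seq 'I_k -> 'I_d) : Prop :=
  forall (x : seq 'I_k) (g : 'I_k), 0 < A (lam x) (lam (rcons x g)).

Definition arrival (k d : nat) (A : 'M[int]_d) (i : 'I_d) (n : nat)
    (f : n.-tuple 'I_k -> 'I_d) : Prop :=
  exists lam : seq 'I_k -> 'I_d,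
    XA A lam /\ lam [::] = i /\ forall x : n.-tuple 'I_k, lam (tval x) = f x.

Definition Pstar_n (k d : nat) (A : 'M[int]_d) (n : nat) : Prop :=
  forall (i : 'I_d) (f : n.-tuple 'I_k -> 'I_d), arrival A i f.

Definition Pstar (k d : nat) (A : 'M[int]_d) : Prop :=
  exists n : nat, @Pstar_n k d A n.

Definition primitive_mx (d : nat) (A : 'M[int]_d.+1) : Prop :=
  exists p : nat, (0 < p)%N /\ forall i j, 0 < (A ^+ p) i j.

From mathcomp Require Import all_boot all_order all_algebra.
Set Implicit Arguments. Unset Strict Implicit. Unset Printing Implicit Defensive.
Import Order.TTheory GRing.Theory Num.Theory.
Local Open Scope ring_scope.

(* If row i0 is positive and A^p > 0, label the levels 0..p along a walk of
   length p from the root symbol to i0; every labeling of level p+1 is then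
   admissible, and it extends downwards because no row of A is zero.
   Conversely, since a vertex has exactly k = d - 1 children, giving them the
   labels D \ {c} forces the parent to be a symbol whose row is positive off
   column c.  Without a positive row, two distinct columns never share such a
   symbol; so either some column c has none, or c |-> (its symbol) is a
   bijection whose inverse h lets us label L_n so that the labels D \ {h b}
   below each vertex labelled b force, level by level, the root label. *)

Section Walks.

Variables (R : numDomainType) (d : nat) (A : 'M[R]_d).
Hypothesis A_ge0 : forall i j, 0 <= A i j.

Lemma expr_mx_ge0 m i j : 0 <= (A ^+ m) i j.
Proof.
elim: m i j => [|m IHm] i j; first by rewrite expr0 mxE ler0n.
by rewrite exprS -mulmxE mxE sumr_ge0 // => l _; rewrite mulr_ge0.
Qed.

Lemma expr_gt0_walk m i j : 0 < (A ^+ m) i j ->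
  exists w : nat -> 'I_d,
    [/\ w 0%N = i, w m = j & forall t, (t < m)%N -> 0 < A (w t) (w t.+1)].
Proof.
elim: m i => [|m IHm] i.
  rewrite expr0 mxE; have [->|] := eqVneq i j; last by rewrite mulr0n ltxx.
  by exists (fun=> j).
rewrite exprS -mulmxE mxE => /gt_eqF/negbT/eqP.
case/psumr_neq0P => [l _|l /= Ail_pow_gt0]; first by rewrite mulr_ge0 ?expr_mx_ge0.
have Ail_gt0 : 0 < A i l.
  by rewrite lt_def A_ge0 andbT; apply: contraTneq Ail_pow_gt0 => ->; rewrite mul0r ltxx.
rewrite pmulr_rgt0 // in Ail_pow_gt0.
have [w [w0 wm walk]] := IHm _ Ail_pow_gt0.
exists (fun t => if t is t'.+1 then w t' else i); split => // -[|t] /=.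
  by rewrite w0.
exact: walk.
Qed.

End Walks.

Section Extension.

Variables (k d : nat) (A : 'M[int]_d).

Lemma XA_extend n (lam0 : seq 'I_k -> 'I_d) :
  (forall i, exists j, 0 < A i j) ->
  (forall (x : seq 'I_k) g, (size x < n)%N -> 0 < A (lam0 x) (lam0 (rcons x g))) ->
  exists2 lam, XA A lam & forall x, (size x <= n)%N -> lam x = lam0 x.
Proof.
move=> row_nonzero lam0_edge.
pose succ i := xchoose (row_nonzero i).
have succ_gt0 i : 0 < A i (succ i) := xchooseP (row_nonzero i).
exists (fun x => if (size x <= n)%N then lam0 x
                 else iter (size x - n) succ (lam0 (take n x))) => [x g|x ->] //.
rewrite size_rcons; case: (ltngtP (size x) n) => [lt_xn|lt_nx|<-].
- exact: lam0_edge.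
- by rewrite subSn 1?ltnW // -cats1 takel_cat 1?ltnW.
- by rewrite subSnn -cats1 take_size_cat.
Qed.

Lemma Pstar_n_of_row_gt0 p i0 :
  (forall i j, 0 <= A i j) -> (0 < p)%N -> (forall i, 0 < (A ^+ p) i i0) ->
  (forall j, 0 < A i0 j) -> Pstar_n k A p.+1.
Proof.
move=> A_ge0 p_gt0 pow_gt0 row_i0_gt0 i f.
have row_nonzero j : exists l, 0 < A j l.
  by have [w [<- _ walk]] := expr_gt0_walk A_ge0 (pow_gt0 j); exists (w 1%N); apply: walk.
have [w [w0 wp walk]] := expr_gt0_walk A_ge0 (pow_gt0 i).
pose lam0 (x : seq 'I_k) :=
  if (size x <= p)%N then w (size x) else odflt i0 (omap f (insub x)).
have [|lam lamX lam_lam0] := XA_extend (n := p.+1) (lam0 := lam0) row_nonzero.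
  move=> x g; rewrite ltnS leq_eqVlt /lam0 size_rcons => /predU1P[->|lt_xp].
    by rewrite leqnn ltnn wp row_i0_gt0.
  by rewrite ltnW // lt_xp walk.
exists lam; split=> //; split=> [|x]; first by rewrite lam_lam0 // /lam0 /= w0.
by rewrite lam_lam0 /lam0 size_tuple ?ltnn ?valK.
Qed.

End Extension.

Section Forcing.

Variables (k : nat) (A : 'M[int]_k.+1).
Hypothesis k_gt0 : (0 < k)%N.

Definition row_gt0 j := [forall e, 0 < A j e].

Definition row_gt0_off c j := [forall e, (e != c) ==> (0 < A j e)].

Lemma ord0_neq_max : ord0 != ord_max :> 'I_k.+1.
Proof. by rewrite -val_eqE /= eq_sym -lt0n. Qed.

Lemma row_gt0_off_lift (c j : 'I_k.+1) :
  (forall g : 'I_k, 0 < A j (lift c g)) -> row_gt0_off c j.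
Proof.
move=> lift_gt0; apply/forallP => e; apply/implyP.
by case: (unliftP c e) => [g ->|->]; rewrite ?eqxx.
Qed.

Lemma row_gt0_off_inj j c1 c2 :
  ~~ row_gt0 j -> row_gt0_off c1 j -> row_gt0_off c2 j -> c1 = c2.
Proof.
case/forallPn => e /negbTE Aje /forallP/(_ e) + /forallP/(_ e).
by rewrite Aje !implybF !negbK => /eqP <- /eqP.
Qed.

Definition forcing h := forall b j, row_gt0_off (h b) j -> j = b.

Lemma forcing_exists :
  (forall j, ~~ row_gt0 j) -> (forall c, exists j, row_gt0_off c j) ->
  exists h, forcing h.
Proof.
move=> no_row_gt0 off_gt0.
pose J c := xchoose (off_gt0 c).
have J_off c : row_gt0_off c (J c) := xchooseP (off_gt0 c).
have J_inj : injective J.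
  move=> c1 c2 J12; apply: (row_gt0_off_inj (no_row_gt0 (J c1))) => //.
  by rewrite J12.
have [h _ Jh] := injF_bij J_inj.
exists h => b j off_hb.
have off_hj : row_gt0_off (h j) j by rewrite -{2}(Jh j).
by rewrite -(Jh j) -(row_gt0_off_inj (no_row_gt0 j) off_hb off_hj) Jh.
Qed.

Section ForcedRoot.

Variable h : 'I_k.+1 -> 'I_k.+1.
Hypothesis h_forcing : forcing h.

Fixpoint forcing_label b (x : seq 'I_k) :=
  if x is g :: x' then forcing_label (lift (h b) g) x' else b.

Lemma forcing_label_root n b lam y : XA A lam ->
  (forall x : n.-tuple 'I_k, lam (y ++ x) = forcing_label b x) -> lam y = b.
Proof.
move=> lamX; elim: n b y => [|n IHn] b y lam_leaf.
  by have := lam_leaf [tuple]; rewrite cats0.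
apply: h_forcing; apply: row_gt0_off_lift => g.
have <- : lam (rcons y g) = lift (h b) g.
  by apply: IHn => x; rewrite -cats1 -catA; apply: (lam_leaf (cons_tuple g x)).
exact: lamX.
Qed.

Lemma forcing_not_Pstar_n n : ~ Pstar_n k A n.
Proof.
move=> Pn; have [lam [lamX [lam_root lam_leaf]]] := Pn ord0 (forcing_label ord_max).
have := forcing_label_root (y := [::]) lamX lam_leaf.
by rewrite lam_root => /eqP; rewrite (negbTE ord0_neq_max).
Qed.

End ForcedRoot.

Lemma Pstar_n_row_gt0_off n : Pstar_n k A n -> forall c, exists j, row_gt0_off c j.
Proof.
case: n => [|n] Pn c.
  have [lam [_ [lam_root lam_leaf]]] := Pn ord0 (fun=> ord_max).
  by have := lam_leaf [tuple]; rewrite /= lam_root => /eqP; rewrite (negbTE ord0_neq_max).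
pose g0 : 'I_k := Ordinal k_gt0.
have [lam [lamX [_ lam_leaf]]] := Pn ord0 (fun x => lift c (last g0 x)).
exists (lam (nseq n g0)); apply: row_gt0_off_lift => g.
have leaf : size (rcons (nseq n g0) g) == n.+1 by rewrite size_rcons size_nseq.
by have := lam_leaf (Tuple leaf); rewrite /= last_rcons => <-; apply: lamX.
Qed.

Lemma Pstar_n_row_gt0 n : Pstar_n k A n -> exists i0, row_gt0 i0.
Proof.
move=> Pn; have [/existsP //|/existsPn no_row_gt0] := boolP [exists i0, row_gt0 i0].
have [h h_forcing] := forcing_exists no_row_gt0 (Pstar_n_row_gt0_off Pn).
by have := forcing_not_Pstar_n h_forcing Pn.
Qed.

End Forcing.

Theorem proposition2p4 (k : nat) (hk : (1 <= k)%N) (A : 'M[int]_(k.+1))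
  (h01 : forall i j, A i j = 0 \/ A i j = 1)
  (hprim : primitive_mx A) :
  Pstar k A <-> exists i0 : 'I_(k.+1), forall j : 'I_(k.+1), A i0 j = 1.
Proof.
have A_ge0 i j : 0 <= A i j by case: (h01 i j) => ->.
have A_gt0 i j : (0 < A i j) = (A i j == 1) by case: (h01 i j) => ->.
split.
- case=> n /(Pstar_n_row_gt0 hk) [i0 /forallP row_i0_gt0].
  by exists i0 => j; apply/eqP; rewrite -A_gt0.
- case=> i0 row_i0; have [p [p_gt0 pow_gt0]] := hprim.
  exists p.+1; apply: (Pstar_n_of_row_gt0 A_ge0 p_gt0 (pow_gt0^~ i0)) => j.
  by rewrite A_gt0 row_i0.
Qed.
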